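(* Consider the queueing system in the context under the MaxWeight policy with a diagonal matrix $\Delta$ with positive diagonal entries, in overload ($\rho\notin\mathcal{P}$). Let $H=\limsup_{t\to\infty}\langle \frac{X(t)}{t},\Delta\frac{X(t)}{t}\rangle$, and let $\{t_c\}$ be an increasing unbounded sequence with $\lim_{c\to\infty}X(t_c)/t_c=\eta$ and $\langle\eta,\Delta\eta\rangle=H$. Then there is no increasing unbounded sequence $\{t_a\}$ with $\lim_{a\to\infty}X(t_a)/t_a=\psi\ne\eta$. Therefore $\lim_{t\to\infty}X(t)/t=\eta$.
   Context: Model: $Q$ queues, finite set $\mathcal{S}=\{S_1,\dots,S_N\}\subset\mathbb{R}^Q_{\ge0}$ of service vectors, discrete time. Arrivals $A(t)$ with $0\le A_q(t)\le\bar A_q<\infty$ and $\rho_q=\lim_{t\to\infty}\frac1t\sum_{s=0}^{t-1}A_q(s)\in(0,\infty)$. Departures $D_q(t)=\min\{S_q(t),X_q(t)\}$, $X(t+1)=X(t)+A(t)-D(t)$, $X(0)=0$, with $S(t)\in\arg\max_{S\in\mathcal{S}}\langle S,\Delta X(t)\rangle$ (MaxWeight). Stability region $\mathcal{P}=\{r\in\mathbb{R}^Q_{\ge0}: r\le\sum_n\alpha_nS_n\text{ for some }\alpha_n\ge0,\sum_n\alpha_n=1\}$. *)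

From HB Require Import structures.
From mathcomp Require Import all_boot all_order all_algebra.
From mathcomp Require Import all_classical all_reals all_analysis.
Set Implicit Arguments. Unset Strict Implicit. Unset Printing Implicit Defensive.
Import Order.TTheory GRing.Theory Num.Theory.
Import numFieldNormedType.Exports.
Local Open Scope classical_set_scope.
Local Open Scope ring_scope.

(* Weighted inner product <u, Delta v> for the diagonal matrix
   Delta = diag(delta). *)
Definition dinner (R : realType) (Q : nat) (delta u v : 'I_Q -> R) : R :=
  \sum_(q < Q) u q * (delta q * v q).

Definition in_stab_region (R : realType) (Q N : nat)
  (Svec : 'I_N -> 'I_Q -> R) (r : 'I_Q -> R) : Prop :=
  (forall q, 0 <= r q) /\
  exists alpha : 'I_N -> R,
    (forall n, 0 <= alpha n) /\ \sum_(n < N) alpha n = 1 /\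
    (forall q, r q <= \sum_(n < N) alpha n * Svec n q).

(* The queueing system under MaxWeight with diagonal weights delta:
   sel t is the index of the service vector S(t) chosen at time t. *)
Definition maxweight_system (R : realType) (Q N : nat)
  (Svec : 'I_N -> 'I_Q -> R) (delta : 'I_Q -> R)
  (A : nat -> 'I_Q -> R) (Abar rho : 'I_Q -> R)
  (sel : nat -> 'I_N) (X : nat -> 'I_Q -> R) : Prop :=
  (forall n q, 0 <= Svec n q) /\
  (forall q, 0 < delta q) /\
  (forall t q, 0 <= A t q /\ A t q <= Abar q) /\
  (forall q, 0 < rho q) /\
  (forall q, (fun t : nat => (\sum_(s < t) A s q) / t%:R) @ \oo --> rho q) /\
  (forall q, X 0%N q = 0) /\
  (forall t q, X t.+1 q = X t q + A t q - Num.min (Svec (sel t) q) (X t q)) /\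
  (forall t n, dinner delta (Svec n) (X t) <= dinner delta (Svec (sel t)) (X t)).

Definition fluid_lim_along (R : realType) (Q : nat)
  (X : nat -> 'I_Q -> R) (tt : nat -> nat) (v : 'I_Q -> R) : Prop :=
  forall q, (fun c : nat => X (tt c) q / (tt c)%:R) @ \oo --> v q.

Definition strictly_increasing (tt : nat -> nat) : Prop :=
  forall m n, (m < n)%N -> (tt m < tt n)%N.

(* MaxWeight drives the queues along the fluid path [t e], where [e] is the
   shortfall [(rho - s)^+] of an approximately optimal mixture [s] of service
   vectors, i.e. one almost minimising [sum_q delta_q ((rho_q - s_q)^+)^2] over
   their convex hull.  For the Lyapunov function
   [W(t) = sum_q delta_q (X_q(t) - t e_q)^2], MaxWeight gives
   [<S(t), Delta X> >= <s, Delta X>] and approximate first-order optimality of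
   [s] gives [<e, Delta (S_n - s)> <= kappa], so the drift of [W] is at most
   [2 kappa t + O(1)] plus a cross term [sum_s Y(s) (A(s) - rho)], which is
   [o(t^2)] by summation by parts since the arrivals have Cesaro mean [rho].
   Thus [W(t) <= kappa t^2 + O(t)] for every [kappa > 0]: [X(t)/t] eventually
   stays within [O(sqrt kappa)] of [e], so it converges, necessarily to the
   subsequential limit [eta]. *)

From mathcomp Require Import all_boot all_order all_algebra.
From mathcomp Require Import all_classical all_reals all_analysis.
From mathcomp Require Import ring lra.
Import Order.TTheory GRing.Theory Num.Theory.
Import numFieldNormedType.Exports.
Local Open Scope classical_set_scope.
Local Open Scope ring_scope.
Set Implicit Arguments. Unset Strict Implicit. Unset Printing Implicit Defensive.

Section PositivePart.
Variable R : realType.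
Implicit Types a b l x : R.

Lemma maxr0_mul_subr x : Num.max x 0 * (x - Num.max x 0) = 0.
Proof. by case: (leP x 0) => _; rewrite ?mul0r ?subrr ?mulr0. Qed.

(* [x |-> (x^+)^2] has derivative [2 x^+], which is 2-Lipschitz. *)
Lemma sqr_maxr0_subr_le a b l :
  Num.max (a - l * b) 0 ^+ 2 <=
  Num.max a 0 ^+ 2 - 2 * l * Num.max a 0 * b + l ^+ 2 * b ^+ 2.
Proof. by case: (leP a 0) => ha; case: (leP (a - l * b) 0) => hb; nra. Qed.

End PositivePart.

Section ConvexHull.
Variables (R : realType) (Q N : nat).
Variables (S : 'I_N -> 'I_Q -> R) (delta rho : 'I_Q -> R).
Hypothesis S_ge0 : forall n q, 0 <= S n q.
Hypothesis delta_ge0 : forall q, 0 <= delta q.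
Hypothesis rho_ge0 : forall q, 0 <= rho q.
Implicit Types (al : 'I_N -> R) (n : 'I_N) (q : 'I_Q) (lam kap : R).

Definition simplex al := (forall n, 0 <= al n) /\ \sum_(n < N) al n = 1.

Definition conv_comb al q := \sum_(n < N) al n * S n q.

Definition service_bound q := \sum_(n < N) S n q.

Definition shortfall al q := Num.max (rho q - conv_comb al q) 0.

Definition shortfall_cost al := \sum_(q < Q) delta q * shortfall al q ^+ 2.

(* Minus half the derivative of [shortfall_cost] at [al] towards the vertex [n]. *)
Definition shortfall_slope al n :=
  \sum_(q < Q) delta q * shortfall al q * (S n q - conv_comb al q).

Definition towards al n lam m := (1 - lam) * al m + lam * (m == n)%:R.

Lemma sum_indicator_mul n (F : 'I_N -> R) : \sum_(m < N) (m == n)%:R * F m = F n.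
Proof.
rewrite (bigD1 n) //= eqxx mul1r big1 ?addr0 // => m /negbTE ->.
by rewrite mul0r.
Qed.

Lemma sum_indicator n : \sum_(m < N) (m == n)%:R = 1 :> R.
Proof.
by rewrite (bigD1 n) //= eqxx big1 ?addr0 // => m /negbTE ->.
Qed.

Lemma S_le_service_bound n q : S n q <= service_bound q.
Proof.
by rewrite /service_bound (bigD1 n) //= lerDl sumr_ge0.
Qed.

Lemma simplex_le1 al n : simplex al -> al n <= 1.
Proof.
by case=> al_ge0 <-; rewrite (bigD1 n) //= lerDl sumr_ge0.
Qed.

Lemma conv_comb_ge0 al q : simplex al -> 0 <= conv_comb al q.
Proof. by case=> al_ge0 _; apply: sumr_ge0 => n _; rewrite mulr_ge0. Qed.

Lemma conv_comb_le al q : simplex al -> conv_comb al q <= service_bound q.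
Proof.
move=> al_simplex; apply: ler_sum => n _.
have al1 := simplex_le1 n al_simplex.
have := S_ge0 n q; have := al_simplex.1 n; nra.
Qed.

Lemma shortfall_ge0 al q : 0 <= shortfall al q.
Proof. by rewrite le_max lexx orbT. Qed.

Lemma shortfall_le al q : simplex al -> shortfall al q <= rho q.
Proof.
move=> al_simplex; rewrite ge_max rho_ge0 andbT gerBl.
exact: conv_comb_ge0.
Qed.

Lemma simplex_towards al n lam :
  simplex al -> 0 <= lam <= 1 -> simplex (towards al n lam).
Proof.
move=> [al_ge0 al1] /andP[lam0 lam1]; split.
  by move=> m; rewrite addr_ge0 ?mulr_ge0 ?subr_ge0 ?ler0n.
by rewrite big_split /= -!mulr_sumr al1 sum_indicator; ring.
Qed.

Lemma conv_comb_towards al n lam q :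
  conv_comb (towards al n lam) q =
  conv_comb al q + lam * (S n q - conv_comb al q).
Proof.
rewrite /conv_comb /towards.
under eq_bigr do rewrite mulrDl -!mulrA.
by rewrite big_split /= -!mulr_sumr sum_indicator_mul; ring.
Qed.

Lemma shortfall_cost_towards al n lam :
  simplex al ->
  shortfall_cost (towards al n lam) <=
  shortfall_cost al - 2 * lam * shortfall_slope al n +
  lam ^+ 2 * \sum_(q < Q) delta q * service_bound q ^+ 2.
Proof.
move=> al_simplex.
rewrite /shortfall_cost /shortfall_slope !mulr_sumr -sumrN -!big_split /=.
apply: ler_sum => q _; rewrite /shortfall conv_comb_towards opprD addrA.
have s0 := conv_comb_ge0 q al_simplex; have s1 := conv_comb_le q al_simplex.
have S0 := S_ge0 n q; have S1 := S_le_service_bound n q.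
set s := conv_comb al q in s0 s1 *; set d := S n q - s.
have d_bound : d ^+ 2 <= service_bound q ^+ 2.
  have : 0 <= service_bound q - d by rewrite /d; lra.
  have : 0 <= service_bound q + d by rewrite /d; lra.
  nra.
apply: le_trans (ler_wpM2l (delta_ge0 q) (sqr_maxr0_subr_le _ d lam)) _.
have : 0 <= delta q * lam ^+ 2 * (service_bound q ^+ 2 - d ^+ 2).
  by rewrite mulr_ge0 ?subr_ge0 // mulr_ge0 ?sqr_ge0.
nra.
Qed.

Lemma approx_optimal_mix (n0 : 'I_N) kap :
  0 < kap -> exists al, simplex al /\ forall n, shortfall_slope al n <= kap.
Proof.
move=> kap_gt0.
pose E := [set shortfall_cost al | al in simplex].
have E_ge0 y : E y -> 0 <= y.
  by move=> [al _ <-]; apply: sumr_ge0 => q _; rewrite mulr_ge0 ?sqr_ge0.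
have E_inf : has_inf E.
  split; last by exists 0 => y /E_ge0.
  exists (shortfall_cost (fun m => (m == n0)%:R)).
  exists (fun m => (m == n0)%:R) => //; split; first by move=> m; rewrite ler0n.
  exact: sum_indicator.
pose C := \sum_(q < Q) delta q * service_bound q ^+ 2.
have C_ge0 : 0 <= C by apply: sumr_ge0 => q _; rewrite mulr_ge0 ?sqr_ge0.
pose lam := kap / (kap + C + 1).
have lam_gt0 : 0 < lam by rewrite divr_gt0 //; lra.
have lamC : lam * C <= kap.
  by rewrite /lam mulrAC ler_pdivrMr; nra.
have lam_le1 : lam <= 1 by rewrite /lam ler_pdivrMr; lra.
have [_ [al al_simplex <-] cost_lt] := inf_adherent (mulr_gt0 kap_gt0 lam_gt0) E_inf.
exists al; split => // n.
have cost_ge : inf E <= shortfall_cost (towards al n lam).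
  apply: (ge_inf (proj2 E_inf)); exists (towards al n lam) => //.
  by apply: simplex_towards => //; rewrite ltW.
have := shortfall_cost_towards n lam al_simplex; rewrite -/C => step.
suff : 2 * lam * shortfall_slope al n <= lam * (kap + kap) by nra.
nra.
Qed.

End ConvexHull.

Section PartialSums.
Variable R : realType.
Implicit Types (Y a : nat -> R) (L : R).

Definition sublinear (u : nat -> R) :=
  forall eps, 0 < eps -> exists K, forall s, `|u s| <= eps * s%:R + K.

Lemma sum_by_parts Y a t :
  \sum_(s < t) Y s * a s =
  Y t * \sum_(r < t) a r - \sum_(s < t) (Y s.+1 - Y s) * \sum_(r < s.+1) a r.
Proof.
elim: t => [|t IH]; first by rewrite !big_ord0 mulr0 subr0.
rewrite big_ord_recr /= IH [in RHS]big_ord_recr [in RHS]big_ord_recr /=.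
by rewrite big_ord_recr /=; ring.
Qed.

Lemma lipschitz_from0_le Y L :
  Y 0%N = 0 -> (forall s, `|Y s.+1 - Y s| <= L) -> forall t, `|Y t| <= L * t%:R.
Proof.
move=> Y0 YL; elim=> [|t IH]; first by rewrite Y0 normr0 mulr0.
have := ler_normD (Y t.+1 - Y t) (Y t); rewrite subrK.
have := YL t; rewrite -natr1; lra.
Qed.

Lemma cesaro_sublinear a (l : R) :
  (fun t => (\sum_(s < t) a s) / t%:R) @ \oo --> l ->
  sublinear (fun t => \sum_(s < t) (a s - l)).
Proof.
move=> /cvgrPdist_le a_cvg eps eps_gt0; have [M _ near_l] := a_cvg eps eps_gt0.
pose K := \sum_(s < M) `|\sum_(r < s) (a r - l)|.
have K_ge0 : 0 <= K by apply: sumr_ge0.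
exists K => s; have epss_ge0 : 0 <= eps * s%:R by rewrite mulr_ge0 // ltW.
have [s_lt|s_ge] := ltnP s M.
  suff : `|\sum_(r < s) (a r - l)| <= K by lra.
  by rewrite /K (bigD1 (Ordinal s_lt)) //= lerDl sumr_ge0.
have [->|s_gt0] := posnP s; first by rewrite big_ord0 normr0 mulr0 add0r.
have s_pos : 0 < s%:R :> R by rewrite ltr0n.
have -> : \sum_(r < s) (a r - l) = s%:R * ((\sum_(r < s) a r) / s%:R - l).
  by rewrite sumrB sumr_const card_ord -mulr_natl; field; rewrite gt_eqF.
rewrite normrM ger0_norm // distrC mulrC.
have := ler_wpM2r (ltW s_pos) (near_l s s_ge); lra.
Qed.

Lemma sum_lipschitz_mul_sublinear Y a L :
  Y 0%N = 0 -> (forall s, `|Y s.+1 - Y s| <= L) ->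
  sublinear (fun t => \sum_(s < t) a s) ->
  forall eps, 0 < eps ->
  exists K, forall t, `|\sum_(s < t) Y s * a s| <= eps * t%:R ^+ 2 + K * t%:R.
Proof.
move=> Y0 YL a_sub eps eps_gt0.
have L_ge0 : 0 <= L := le_trans (normr_ge0 _) (YL 0%N).
pose eta := eps / (2 * L + 1).
have eta_gt0 : 0 < eta by rewrite divr_gt0 //; lra.
have etaL : 2 * L * eta <= eps.
  by rewrite /eta mulrA ler_pdivrMr; nra.
have [K0 a_le] := a_sub eta eta_gt0.
exists (2 * L * K0) => t.
have t_ge0 : 0 <= t%:R :> R by [].
have a_le_t s : (s <= t)%N -> `|\sum_(r < s) a r| <= eta * t%:R + K0.
  move=> st; apply: le_trans (a_le s) _; rewrite lerD2r.
  by apply: ler_wpM2l; [exact: ltW | rewrite ler_nat].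
have head : `|Y t * \sum_(r < t) a r| <= L * t%:R * (eta * t%:R + K0).
  rewrite normrM; apply: ler_pM; [by [] | by [] | | exact: a_le_t].
  exact: lipschitz_from0_le.
have tail : `|\sum_(s < t) (Y s.+1 - Y s) * \sum_(r < s.+1) a r| <=
            t%:R * (L * (eta * t%:R + K0)).
  apply: le_trans (ler_norm_sum _ _ _) _.
  rewrite mulr_natl -[X in _ *+ X]card_ord -sumr_const; apply: ler_sum => s _.
  by rewrite normrM ler_pM // a_le_t.
rewrite sum_by_parts; apply: le_trans (ler_normB _ _) _.
have : 0 <= (eps - 2 * L * eta) * t%:R ^+ 2 by rewrite mulr_ge0 ?sqr_ge0 ?subr_ge0.
nra.
Qed.

End PartialSums.

Section Subsequences.
Variable R : realType.

Lemma strictly_increasing_cvgn (tt : nat -> nat) :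
  strictly_increasing tt -> tt @ \oo --> \oo.
Proof.
move=> tt_incr; have tt_ge c : (c <= tt c)%N.
  by elim: c => // c IH; apply: leq_ltn_trans IH (tt_incr _ _ (ltnSn c)).
apply/cvgnyPge => M; near=> c; apply: leq_trans (tt_ge c).
by near: c; apply: nbhs_infty_ge.
Unshelve. all: end_near.
Qed.

Lemma cvg_approx_subseq (f : nat -> R) (tt : nat -> nat) (l : R) :
  tt @ \oo --> \oo -> (fun c => f (tt c)) @ \oo --> l ->
  (forall eps, 0 < eps -> exists c, \forall t \near \oo, `|f t - c| <= eps) ->
  f @ \oo --> l.
Proof.
move=> tt_cvg ftt_cvg f_approx; apply/cvgrPdist_le => eps eps_gt0.
have [c f_near_c] := f_approx _ (divr_gt0 eps_gt0 (ltr0n R 2)).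
have l_near_c : `|l - c| <= eps / 2.
  have dist_cvg : (fun k => `|f (tt k) - c|) @ \oo --> `|l - c|.
    by apply: cvg_norm; apply: cvgB => //; exact: cvg_cst.
  apply: ler_cvg_to dist_cvg (cvg_cst (eps / 2)) _.
  exact: tt_cvg f_near_c.
near=> t; have := ler_normD (l - c) (c - f t).
rewrite addrA subrK [`|c - f t|]distrC.
have : `|f t - c| <= eps / 2 by near: t.
lra.
Unshelve. all: end_near.
Qed.

End Subsequences.

Section MaxWeight.
Variables (R : realType) (Q N : nat).
Variables (S : 'I_N -> 'I_Q -> R) (delta : 'I_Q -> R).
Variables (A : nat -> 'I_Q -> R) (Abar rho : 'I_Q -> R).
Variables (sel : nat -> 'I_N) (X : nat -> 'I_Q -> R).
Hypothesis S_ge0 : forall n q, 0 <= S n q.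
Hypothesis delta_gt0 : forall q, 0 < delta q.
Hypothesis A_ge0 : forall t q, 0 <= A t q.
Hypothesis A_le : forall t q, A t q <= Abar q.
Hypothesis rho_ge0 : forall q, 0 <= rho q.
Hypothesis A_avg :
  forall q, (fun t => (\sum_(s < t) A s q) / t%:R) @ \oo --> rho q.
Hypothesis X0 : forall q, X 0%N q = 0.
Hypothesis X_step :
  forall t q, X t.+1 q = X t q + A t q - Num.min (S (sel t) q) (X t q).
Hypothesis maxweight :
  forall t n, dinner delta (S n) (X t) <= dinner delta (S (sel t)) (X t).

Let delta_ge0 q : 0 <= delta q := ltW (delta_gt0 q).

Definition served t q := Num.min (S (sel t) q) (X t q).

Lemma X_ge0 t q : 0 <= X t q.
Proof.
elim: t q => [|t IH] q; first by rewrite X0.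
have : served t q <= X t q by rewrite ge_min lexx orbT.
by rewrite X_step -/(served t q); have := A_ge0 t q; lra.
Qed.

Lemma served_ge0 t q : 0 <= served t q.
Proof. by rewrite le_min S_ge0 X_ge0. Qed.

Lemma served_le t q : served t q <= S (sel t) q.
Proof. by rewrite ge_min lexx. Qed.

Definition dev (e : 'I_Q -> R) t q := X t q - t%:R * e q.

Definition lyapunov e t := \sum_(q < Q) delta q * dev e t q ^+ 2.

Definition drift_const :=
  2 * \sum_(q < Q) delta q * service_bound S q ^+ 2 +
  \sum_(q < Q) delta q * (Abar q + service_bound S q + rho q) ^+ 2.

Lemma dev0 e q : dev e 0 q = 0.
Proof. by rewrite /dev X0 mul0r subrr. Qed.

Lemma dev_step e t q : dev e t.+1 q = dev e t q + (A t q - served t q - e q).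
Proof. by rewrite /dev X_step -natr1 /served; ring. Qed.

Lemma maxweight_ge_conv_comb al t : simplex al ->
  dinner delta (conv_comb S al) (X t) <= dinner delta (S (sel t)) (X t).
Proof.
move=> [al_ge0 al1].
have -> : dinner delta (conv_comb S al) (X t) =
          \sum_(n < N) al n * dinner delta (S n) (X t).
  rewrite /conv_comb /dinner; under eq_bigr do rewrite mulr_suml.
  rewrite exchange_big /=; apply: eq_bigr => n _; rewrite mulr_sumr.
  by apply: eq_bigr => q _; ring.
rewrite -[leRHS]mul1r -al1 mulr_suml; apply: ler_sum => n _.
exact: ler_wpM2l.
Qed.

(* Where [S (sel t) <= X t], [served] is all of [S (sel t)]; elsewhere
   [S * X <= S ^+ 2]. *)
Lemma dinner_served_le t :
  dinner delta (S (sel t)) (X t) <=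
  dinner delta (served t) (X t) + \sum_(q < Q) delta q * service_bound S q ^+ 2.
Proof.
rewrite /dinner -big_split /=; apply: ler_sum => q _.
have S0 := S_ge0 (sel t) q; have S1 := S_le_service_bound S_ge0 (sel t) q.
have X0q := X_ge0 t q; have d0 := delta_ge0 q.
rewrite /served; case: (leP (S (sel t) q) (X t q)) => hSX.
  have : 0 <= delta q * service_bound S q ^+ 2 by rewrite mulr_ge0 ?sqr_ge0.
  nra.
have : S (sel t) q * X t q <= service_bound S q ^+ 2 by nra.
nra.
Qed.

Section ApproxOptimalMix.
Variables (al : 'I_N -> R) (kap : R).
Hypothesis al_simplex : simplex al.
Hypothesis al_slope : forall n, shortfall_slope S delta rho al n <= kap.

Local Notation e := (shortfall S rho al).
Local Notation s := (conv_comb S al).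

Lemma dev_increment_le t q :
  `|dev e t.+1 q - dev e t q| <= Abar q + service_bound S q + rho q.
Proof.
rewrite dev_step addrC addKr.
have e0 := shortfall_ge0 S rho al q.
have e1 := shortfall_le S_ge0 rho_ge0 q al_simplex.
have := served_ge0 t q; have := served_le t q.
have := S_le_service_bound S_ge0 (sel t) q; have := A_ge0 t q; have := A_le t q.
rewrite ler_norml; move=> *; apply/andP; split; lra.
Qed.

(* Complementary slackness between the shortfall and the spare capacity. *)
Lemma shortfall_mul q : e q * (rho q - e q) = e q * s q.
Proof.
have := maxr0_mul_subr (rho q - s q); rewrite -/(shortfall S rho al q).
by move=> h; apply/eqP; rewrite -subr_eq0 -h; apply/eqP; ring.
Qed.

(* MaxWeight beats the mixture [s] against [X t], and by approximate optimality
   of [al] the shortfall gains at most [kap] against [S (sel t)]. *)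
Lemma drift_le t :
  \sum_(q < Q) delta q * dev e t q * ((rho q - e q) - served t q) <=
  \sum_(q < Q) delta q * service_bound S q ^+ 2 + t%:R * kap.
Proof.
have -> : \sum_(q < Q) delta q * dev e t q * ((rho q - e q) - served t q) =
    dinner delta (fun q => rho q - e q) (X t) - dinner delta (served t) (X t)
    - t%:R * dinner delta e (fun q => rho q - e q)
    + t%:R * dinner delta e (served t).
  rewrite /dinner !mulr_sumr -!sumrN -!big_split /=.
  by apply: eq_bigr => q _; rewrite /dev; ring.
have -> : dinner delta e (fun q => rho q - e q) = dinner delta e s.
  by apply: eq_bigr => q _; rewrite mulrCA shortfall_mul mulrCA.
have e0 := shortfall_ge0 S rho al.
have hX : dinner delta (fun q => rho q - e q) (X t) <= dinner delta s (X t).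
  apply: ler_sum => q _; rewrite ler_wpM2r ?mulr_ge0 ?X_ge0 //.
  have : rho q - s q <= e q by rewrite le_max lexx.
  lra.
have hE : dinner delta e (served t) <= dinner delta e s + kap.
  have : dinner delta e (served t) <= dinner delta e (S (sel t)).
    by apply: ler_sum => q _; rewrite ler_wpM2l // ler_wpM2l ?served_le.
  suff : dinner delta e (S (sel t)) - dinner delta e s <= kap by lra.
  apply: le_trans (al_slope (sel t)); rewrite le_eqVlt; apply/orP; left.
  rewrite /dinner /shortfall_slope -sumrB; apply/eqP/eq_bigr => q _; ring.
have := maxweight_ge_conv_comb t al_simplex; have := dinner_served_le t.
have : 0 <= t%:R * (dinner delta e s + kap - dinner delta e (served t)).
  by rewrite mulr_ge0 ?subr_ge0.
nra.
Qed.

Lemma lyapunov_step t :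
  lyapunov e t.+1 <=
  lyapunov e t + 2 * \sum_(q < Q) delta q * dev e t q * (A t q - rho q) +
  drift_const + 2 * (t%:R * kap).
Proof.
have -> : lyapunov e t.+1 = lyapunov e t
    + 2 * \sum_(q < Q) delta q * dev e t q * (A t q - rho q)
    + 2 * \sum_(q < Q) delta q * dev e t q * ((rho q - e q) - served t q)
    + \sum_(q < Q) delta q * (dev e t.+1 q - dev e t q) ^+ 2.
  rewrite /lyapunov !mulr_sumr -!big_split /=; apply: eq_bigr => q _.
  by rewrite dev_step; ring.
have incr : \sum_(q < Q) delta q * (dev e t.+1 q - dev e t q) ^+ 2 <=
            \sum_(q < Q) delta q * (Abar q + service_bound S q + rho q) ^+ 2.
  apply: ler_sum => q _; apply: ler_wpM2l => //.
  rewrite -real_normK ?num_real // ler_sqr ?nnegrE //.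
    exact: dev_increment_le.
  exact: le_trans (dev_increment_le t q).
have := drift_le t; rewrite /drift_const; lra.
Qed.

Hypothesis kap_ge0 : 0 <= kap.

Lemma lyapunov_le t :
  lyapunov e t <=
  2 * \sum_(q < Q) delta q * \sum_(r < t) dev e r q * (A r q - rho q) +
  t%:R * drift_const + t%:R ^+ 2 * kap.
Proof.
elim: t => [|t IH].
  have -> : lyapunov e 0 = 0 by rewrite /lyapunov big1 // => q _; rewrite dev0 expr0n mulr0.
  rewrite big1 => [|q _]; last by rewrite big_ord0 mulr0.
  by rewrite mulr0 mul0r expr0n /= mul0r !addr0.
under [X in 2 * X]eq_bigr do rewrite big_ord_recr /= mulrDr mulrA.
rewrite big_split /= -[t.+1%:R]natr1.
have := lyapunov_step t; have := kap_ge0; lra.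
Qed.

End ApproxOptimalMix.

Lemma lyapunov_subquadratic kap : 0 < kap ->
  exists e K, forall t, lyapunov e t <= kap * t%:R ^+ 2 + K * t%:R.
Proof.
move=> kap_gt0.
have [al [al_simplex al_slope]] :=
  approx_optimal_mix rho S_ge0 delta_ge0 (sel 0%N) (divr_gt0 kap_gt0 (ltr0n R 2)).
set e := shortfall S rho al.
pose D := \sum_(q < Q) delta q.
have D_ge0 : 0 <= D by apply: sumr_ge0.
pose eps := kap / (4 * D + 4).
have eps_gt0 : 0 < eps by rewrite divr_gt0 //; lra.
have epsD : 4 * D * eps <= kap by rewrite /eps mulrA ler_pdivrMr; nra.
have cross_ex q : exists k, forall t,
    `|\sum_(r < t) dev e r q * (A r q - rho q)| <= eps * t%:R ^+ 2 + k * t%:R.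
  apply: (@sum_lipschitz_mul_sublinear _ (dev e ^~ q) (fun r => A r q - rho q)
           (Abar q + service_bound S q + rho q)) eps_gt0.
  - exact: dev0.
  - by move=> r; exact: dev_increment_le.
  - exact: (@cesaro_sublinear _ (A ^~ q) _ (@A_avg q)).
have [K cross_le] := fin_all_exists cross_ex.
exists e, (2 * \sum_(q < Q) delta q * K q + drift_const) => t.
have kap2_ge0 : 0 <= kap / 2 by rewrite divr_ge0 // ltW.
apply: le_trans (lyapunov_le al_simplex al_slope kap2_ge0 t) _.
have cross : \sum_(q < Q) delta q * \sum_(r < t) dev e r q * (A r q - rho q) <=
             D * eps * t%:R ^+ 2 + (\sum_(q < Q) delta q * K q) * t%:R.
  rewrite /D !mulr_suml -big_split /=; apply: ler_sum => q _.
  rewrite -mulrA -mulrA -mulrDr ler_wpM2l //.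
  exact: le_trans (ler_norm _) (cross_le q t).
have : 0 <= t%:R ^+ 2 * (kap - 4 * D * eps) by rewrite mulr_ge0 ?sqr_ge0 ?subr_ge0.
nra.
Qed.

Lemma scaled_queue_approx q eps : 0 < eps ->
  exists c, \forall t \near \oo, `|X t q / t%:R - c| <= eps.
Proof.
move=> eps_gt0; pose kap := delta q * eps ^+ 2 / 2.
have kap_gt0 : 0 < kap by rewrite divr_gt0 // mulr_gt0 // exprn_gt0.
have [e [K lyapunov_le_t]] := lyapunov_subquadratic kap_gt0.
exists (e q); near=> t.
have t_gt0 : 0 < t%:R :> R by rewrite ltr0n; near: t; exact: nbhs_infty_gt.
have Kt : K <= kap * t%:R.
  by rewrite -ler_pdivrMl //; near: t; exact: nbhs_infty_ger.
have dev_le : delta q * dev e t q ^+ 2 <= lyapunov e t.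
  rewrite /lyapunov (bigD1 q) //= lerDl sumr_ge0 // => r _.
  by rewrite mulr_ge0 ?sqr_ge0.
have dev_sqr_le : dev e t q ^+ 2 <= (eps * t%:R) ^+ 2.
  rewrite -(ler_pM2l (delta_gt0 q)); apply: le_trans dev_le _.
  apply: le_trans (lyapunov_le_t t) _.
  have : K * t%:R <= kap * t%:R ^+ 2 by rewrite expr2 mulrA ler_wpM2r // ltW.
  rewrite /kap; lra.
have dev_le_eps : `|dev e t q| <= eps * t%:R.
  rewrite -ler_sqr ?nnegrE ?normr_ge0 //; last by rewrite mulr_ge0 // ltW.
  by rewrite real_normK ?num_real.
have -> : X t q / t%:R - e q = dev e t q / t%:R.
  by rewrite /dev; field; rewrite gt_eqF.
by rewrite normf_div (ger0_norm (ltW t_gt0)) ler_pdivrMr.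
Unshelve. all: end_near.
Qed.

Lemma fluid_limit_cvg tc eta :
  strictly_increasing tc -> fluid_lim_along X tc eta ->
  forall q, (fun t => X t q / t%:R) @ \oo --> eta q.
Proof.
move=> tc_incr tc_cvg q.
apply: cvg_approx_subseq (strictly_increasing_cvgn tc_incr) (tc_cvg q) _.
exact: scaled_queue_approx.
Qed.

End MaxWeight.

Theorem proposition1 (R : realType) (Q N : nat)
  (Svec : 'I_N -> 'I_Q -> R) (delta : 'I_Q -> R)
  (A : nat -> 'I_Q -> R) (Abar rho : 'I_Q -> R)
  (sel : nat -> 'I_N) (X : nat -> 'I_Q -> R)
  (Hsys : maxweight_system Svec delta A Abar rho sel X)
  (Hover : ~ in_stab_region Svec rho)
  (tc : nat -> nat) (eta : 'I_Q -> R)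
  (Htc : strictly_increasing tc)
  (Heta : fluid_lim_along X tc eta)
  (HH : ((dinner delta eta eta)%:E =
         limn_esup (fun t : nat =>
           (dinner delta (fun q => X t q / t%:R) (fun q => X t q / t%:R))%:E))%E) :
  (~ exists (ta : nat -> nat) (psi : 'I_Q -> R),
       strictly_increasing ta /\ fluid_lim_along X ta psi /\ psi <> eta) /\
  (forall q, (fun t : nat => X t q / t%:R) @ \oo --> eta q).
Proof.
case: Hsys => [S_ge0 [delta_gt0 [A_bounds [rho_gt0 [A_avg [X0 [X_step mw]]]]]]].
have A_ge0 t q : 0 <= A t q := (A_bounds t q).1.
have A_le t q : A t q <= Abar q := (A_bounds t q).2.
have rho_ge0 q : 0 <= rho q := ltW (rho_gt0 q).
have X_cvg q : (fun t => X t q / t%:R) @ \oo --> eta q.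
  exact: (fluid_limit_cvg S_ge0 delta_gt0 A_ge0 A_le rho_ge0 A_avg X0 X_step mw Htc).
split=> // -[ta [psi [ta_incr [ta_cvg psi_ne_eta]]]].
apply: psi_ne_eta; apply/funext => q; apply: cvg_unique (ta_cvg q) _ => //.
exact: cvg_comp _ _ (strictly_increasing_cvgn ta_incr) (X_cvg q).
Qed.
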